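(* Let $X$ be a set, $\Omega$ a class of double sequences in $X$ with associated limits satisfying conditions (i)–(iv) below, and let $\tau$ be the resulting convergence topology on $X$. Let $\Sigma$ be the collection of all double sequences in $X$ that converge in Pringsheim's sense with respect to $\tau$. Then $\Omega\subseteq\Sigma$; more precisely, if $x\in\Omega$ has limit $l$, then $x$ converges in Pringsheim's sense to $l$ in $(X,\tau)$. Conditions: (i) for every $p\in X$, the constant double sequence $x_{ij}=p$ belongs to $\Omega$ and has limit $p$; (ii) if $x\in\Omega$ has limit $l$ and $z$ is obtained from $x$ by addition of finitely many terms, then $z\in\Omega$ has limit $l$; (iii) if $A,B$ are nonempty disjoint subsets of $X$ and $x\in\Omega$ has all terms in $A\cup B$ and limit $p$, then there is $y\in\Omega$ with limit $p$, range contained in the range of $x$, and terms all in $A$ or all in $B$; (iv) if $x=\{x_{ij}\}\in\Omega$ has limit $p$ and $\{x_n\}$ is a sequence with $x_n=x_{i_nj_n}$ for some $i_n>n$, $j_n>n$, then $y_{ij}=x_i$ ($i,j\in\mathbb{N}$) belongs to $\Omega$ and has limit $p$.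
   Context: Addition of one term to a double sequence $\{x_{ij}\}$: given $y\in X$ and $m,n\in\mathbb{N}$, either insert $y$ into row $m$ right after position $n$ (shifting the later entries of row $m$ one place to the right, other rows unchanged) or into column $n$ right after position $m$ (shifting later entries of column $n$ one place down, other columns unchanged); addition of finitely many terms is the successive application of such single insertions. The convergence topology $\tau$ on $X$ determined by $\Omega$: $G\subseteq X$ is open iff no member of $\Omega$ all of whose terms lie in $X\setminus G$ has a limit in $G$ (this is a topology). A double sequence $\{x_{ij}\}$ converges in Pringsheim's sense to $\xi$ in $(X,\tau)$ if for every open $U\ni\xi$ there is $k$ with $x_{ij}\in U$ for all $i>k$, $j>k$. *)

(* Double sequences in X are functions nat -> nat -> X
   (indices start at 0; this is only a relabelling of N = {1,2,...}). *)
From Stdlib Require Import Arith.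

Definition dseq (X : Type) := nat -> nat -> X.

Definition insert_row {X : Type} (m n : nat) (y : X) (x : dseq X) : dseq X :=
  fun i j =>
    if Nat.eqb i m then
      (if Nat.leb j n then x i j
       else if Nat.eqb j (S n) then y else x i (Nat.pred j))
    else x i j.

Definition insert_col {X : Type} (m n : nat) (y : X) (x : dseq X) : dseq X :=
  fun i j =>
    if Nat.eqb j n then
      (if Nat.leb i m then x i j
       else if Nat.eqb i (S m) then y else x (Nat.pred i) j)
    else x i j.

Inductive add_one_term {X : Type} (x : dseq X) : dseq X -> Prop :=
  | aot_row : forall m n y, add_one_term x (insert_row m n y x)
  | aot_col : forall m n y, add_one_term x (insert_col m n y x).

Inductive add_finitely {X : Type} (x : dseq X) : dseq X -> Prop :=
  | af_nil : add_finitely x x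
  | af_step : forall z w, add_finitely x z -> add_one_term z w -> add_finitely x w.

(* Omega is given by a membership predicate Om and a limit assignment lim
   (only its values on members of Omega matter). *)
Definition cond_i {X : Type} (Om : dseq X -> Prop) (lim : dseq X -> X) : Prop :=
  forall p : X, Om (fun _ _ => p) /\ lim (fun _ _ => p) = p.

Definition cond_ii {X : Type} (Om : dseq X -> Prop) (lim : dseq X -> X) : Prop :=
  forall x z : dseq X, Om x -> add_finitely x z -> Om z /\ lim z = lim x.

Definition cond_iii {X : Type} (Om : dseq X -> Prop) (lim : dseq X -> X) : Prop :=
  forall (A B : X -> Prop) (x : dseq X),
    (exists a, A a) -> (exists b, B b) -> (forall t, A t -> B t -> False) ->
    Om x -> (forall i j, A (x i j) \/ B (x i j)) ->
    exists y : dseq X, Om y /\ lim y = lim x /\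
      (forall i j, exists k l, y i j = x k l) /\
      ((forall i j, A (y i j)) \/ (forall i j, B (y i j))).

Definition cond_iv {X : Type} (Om : dseq X -> Prop) (lim : dseq X -> X) : Prop :=
  forall (x : dseq X) (ii jj : nat -> nat),
    Om x -> (forall n, n < ii n /\ n < jj n) ->
    Om (fun i _ => x (ii i) (jj i)) /\ lim (fun i _ => x (ii i) (jj i)) = lim x.

Definition tau_open {X : Type} (Om : dseq X -> Prop) (lim : dseq X -> X)
  (G : X -> Prop) : Prop :=
  forall x : dseq X, Om x -> (forall i j, ~ G (x i j)) -> ~ G (lim x).

Definition pringsheim {X : Type} (Om : dseq X -> Prop) (lim : dseq X -> X)
  (x : dseq X) (xi : X) : Prop :=
  forall U : X -> Prop, tau_open Om lim U -> U xi ->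
    exists k, forall i j, k < i -> k < j -> U (x i j).

Definition Sigma {X : Type} (Om : dseq X -> Prop) (lim : dseq X -> X)
  (x : dseq X) : Prop := exists xi, pringsheim Om lim x xi.

(* Only condition (iv) is needed. If x in Omega with limit l did not converge
   to l in Pringsheim's sense, some open U containing l would miss, for every n,
   a term x_{i_n j_n} with i_n, j_n > n. By (iv) the double sequence
   y_{ij} = x_{i_i j_i} lies in Omega with limit l, yet none of its terms lies
   in U, contradicting the openness of U. *)
From Stdlib Require Import Classical ClassicalEpsilon.

Lemma not_eventually_diagonal_witness (P : nat -> nat -> Prop) :
  ~ (exists k, forall i j, k < i -> k < j -> P i j) ->
  exists ii jj : nat -> nat, forall n, n < ii n /\ n < jj n /\ ~ P (ii n) (jj n).
Proof.
  intros not_eventually.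
  assert (witness : forall n, exists ij : nat * nat,
            n < fst ij /\ n < snd ij /\ ~ P (fst ij) (snd ij)).
  { intros n; apply NNPP; intros no_witness.
    apply not_eventually; exists n; intros i j lt_ni lt_nj.
    apply NNPP; intros not_P.
    apply no_witness; exists (i, j); auto. }
  destruct (choice _ witness) as [f Hf].
  exists (fun n => fst (f n)), (fun n => snd (f n)); exact Hf.
Qed.

Lemma Om_pringsheim_lim {X : Type} {Om : dseq X -> Prop} {lim : dseq X -> X}
  (Hiv : cond_iv Om lim) {x : dseq X} :
  Om x -> pringsheim Om lim x (lim x).
Proof.
  intros Om_x U U_open U_lim.
  apply NNPP; intros not_eventually.
  destruct (not_eventually_diagonal_witness _ not_eventually) as [ii [jj Hij]].
  destruct (Hiv x ii jj Om_x) as [Om_y lim_y].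
  { intros n; destruct (Hij n) as [? [? _]]; auto. }
  apply (U_open _ Om_y).
  - intros i _; destruct (Hij i) as [_ [_ not_U]]; exact not_U.
  - rewrite lim_y; exact U_lim.
Qed.

Theorem theorem3p4 (X : Type) (Om : dseq X -> Prop) (lim : dseq X -> X)
  (Hi : cond_i Om lim) (Hii : cond_ii Om lim)
  (Hiii : cond_iii Om lim) (Hiv : cond_iv Om lim) :
  (forall x : dseq X, Om x -> Sigma Om lim x) /\
  (forall x : dseq X, Om x -> pringsheim Om lim x (lim x)).
Proof.
  split; intros x Om_x.
  - exists (lim x); exact (Om_pringsheim_lim Hiv Om_x).
  - exact (Om_pringsheim_lim Hiv Om_x).
Qed.
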